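(* Let $k \ge 0$ be an integer. Let $A, B, C, D$ be pairwise disjoint piles of coins, each of size $2^k$, containing exactly two counterfeit coins in total, and suppose it is known that either (one coin of $A$ and one coin of $B$ are counterfeit) or (one coin of $C$ and one coin of $D$ are counterfeit). Then there is an adaptive strategy using at most $k+1$ weighings on a 5-way scale that determines both counterfeit coins.
   Context: Coins look identical; all genuine coins have one common weight, all counterfeit coins have one common weight strictly less than the genuine weight. A weighing places two disjoint sets of coins of equal cardinality on the left and right pans. Let $d$ = (number of counterfeit coins on the left pan) $-$ (number of counterfeit coins on the right pan). A 5-way scale reports MUCH LESS if $d \ge 2$, LESS if $d = 1$, EQUAL if $d = 0$, MORE if $d = -1$, MUCH MORE if $d \le -2$. A strategy chooses each weighing possibly depending on previous outcomes; it determines the counterfeit coins if the sequence of outcomes uniquely identifies them. *)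

From HB Require Import structures.
From mathcomp Require Import all_boot.
Set Implicit Arguments. Unset Strict Implicit. Unset Printing Implicit Defensive.

Inductive outcome := MuchLess | Less | Equal | More | MuchMore.

Section Weighing.
Variable T : finType.

Definition outcome_of (S L R : {set T}) : outcome :=
  let dl := #|S :&: L| in
  let dr := #|S :&: R| in
  if dr + 2 <= dl then MuchLess
  else if dl == dr + 1 then Less
  else if dl == dr then Equal
  else if dr == dl + 1 then More
  else MuchMore.

Inductive strategy :=
  | Stop
  | Weigh of {set T} & {set T} & (outcome -> strategy).

Fixpoint valid_strategy (t : strategy) : Prop :=
  match t with
  | Stop => True
  | Weigh L R f => [disjoint L & R] /\ #|L| = #|R| /\ forall o, valid_strategy (f o)
  end.

Fixpoint uses_at_most (t : strategy) (n : nat) : Prop :=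
  match t with
  | Stop => True
  | Weigh _ _ f => match n with 0 => False | n'.+1 => forall o, uses_at_most (f o) n' end
  end.

Fixpoint run (t : strategy) (S : {set T}) : seq outcome :=
  match t with
  | Stop => [::]
  | Weigh L R f => let o := outcome_of S L R in o :: run (f o) S
  end.

Definition determines (t : strategy) (adm : {set T} -> Prop) : Prop :=
  forall S1 S2, adm S1 -> adm S2 -> run t S1 = run t S2 -> S1 = S2.

End Weighing.

(* Coins: four disjoint piles A,B,C,D (indices 0,1,2,3), each of size 2^k. *)
Definition coin (k : nat) : finType := ('I_4 * 'I_(2 ^ k))%type.

Definition admissible (k : nat) (S : {set coin k}) : Prop :=
  (exists a b : 'I_(2 ^ k), S = [set (inord 0, a); (inord 1, b)]) \/
  (exists c d : 'I_(2 ^ k), S = [set (inord 2, c); (inord 3, d)]).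

From mathcomp Require Import all_boot.

(* The strategy is non-adaptive.  The first weighing puts pile A against
   pile C: it shows LESS when the counterfeit pair lies in A and B and MORE
   when it lies in C and D.  Then, for every bit position j < k, one weighing
   compares
     left  = {A-coins with bit j set} + {B-coins with bit j set}
             + {C-coins with bit j clear},
     right = {A-coins with bit j clear} + {C-coins with bit j set}
             + {D-coins with bit j set},
   two disjoint pans exchanged by the pile swap A<->C, B<->D, hence of equal
   size.  If the counterfeit coins are a in A and b in B, the imbalance is
   (2 bit_j(a) - 1) + bit_j(b); if they are c in C and d in D it is
   (1 - 2 bit_j(c)) - bit_j(d); in both cases the 5-way outcome recovers the
   two bits.  Since an index below 2^k is determined by its k low bits,
   the k+1 outcomes determine the counterfeit pair. *)

Section NonAdaptive.
Context {T : finType}.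

Fixpoint oblivious (ws : seq ({set T} * {set T})) : strategy T :=
  if ws is w :: ws' then Weigh w.1 w.2 (fun _ => oblivious ws') else Stop T.

Definition fair (w : {set T} * {set T}) : bool :=
  [disjoint w.1 & w.2] && (#|w.1| == #|w.2|).

Lemma valid_oblivious ws : all fair ws -> valid_strategy (oblivious ws).
Proof.
elim: ws => //= w ws IH /andP[/andP[disj_w /eqP card_w] /IH valid_ws].
by split; [|split=> // _].
Qed.

Lemma uses_oblivious ws : uses_at_most (oblivious ws) (size ws).
Proof. by elim: ws => //= w ws IH. Qed.

Lemma run_oblivious ws S :
  run (oblivious ws) S = [seq outcome_of S w.1 w.2 | w <- ws].
Proof. by elim: ws => //= w ws ->. Qed.

Lemma fair_exchanged (f : T -> T) (L R : {set T}) : injective f ->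
  (forall x, x \in L -> x \notin R) -> (forall x, (x \in R) = (f x \in L)) ->
  fair (L, R).
Proof.
move=> inj_f disj_LR RfL; apply/andP; split.
  by rewrite disjoint_subset; apply/subsetP => x /disj_LR; rewrite inE.
rewrite -(card_preimset L inj_f); apply/eqP/eq_card => x.
by rewrite !inE RfL.
Qed.

Lemma card_pairI (x y : T) (P : {set T}) : x != y ->
  #|[set x; y] :&: P| = (x \in P) + (y \in P).
Proof.
move=> neq_xy; rewrite (cardsD1 x) (cardsD1 y) !inE eqxx (eq_sym y x) neq_xy.
rewrite eqxx orbT /=.
suff -> : [set x; y] :&: P :\ x :\ y = set0 by rewrite cards0 addn0.
by apply/setP => z; rewrite !inE; case: eqP => //= _; case: eqP.
Qed.

End NonAdaptive.

Definition bit (i j : nat) : bool := odd (i %/ 2 ^ j).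

Lemma bits_inj n i i' : i < 2 ^ n -> i' < 2 ^ n ->
  (forall j, j < n -> bit i j = bit i' j) -> i = i'.
Proof.
elim: n i i' => [|n IH] i i' lt_i lt_i' same_bits.
  by move: lt_i lt_i'; rewrite expn0 !ltnS !leqn0 => /eqP -> /eqP ->.
have low_bit : odd i = odd i' by have := same_bits 0 isT; rewrite /bit !divn1.
rewrite (divn_eq i 2) (divn_eq i' 2) !modn2 low_bit; congr (_ * 2 + _).
apply: IH; rewrite ?ltn_divLR // -?expnSr // => j lt_jn.
by have := same_bits j.+1 lt_jn; rewrite /bit -!divnMA -expnS.
Qed.

Section Piles.
Variable k : nat.
Local Notation coin := (coin k).

Definition pile (x : coin) : nat := x.1.

Lemma pile_inord p i : p < 4 -> pile (inord p, i) = p.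
Proof. exact: inordK. Qed.

(* The pile swap A <-> C, B <-> D; it exchanges the pans of every weighing. *)
Definition swap_piles (x : coin) : coin := (inord ((x.1 + 2) %% 4), x.2).

Lemma swap_piles_inj : injective swap_piles.
Proof.
apply: (can_inj (g := swap_piles)) => -[p i]; congr pair; apply: val_inj.
by rewrite /= !inordK ?ltn_pmod //; case: p => -[|[|[|[|p]]]].
Qed.

Lemma swap_piles_pile (x : coin) : pile (swap_piles x) = (pile x + 2) %% 4.
Proof. by rewrite /pile /= inordK // ltn_pmod. Qed.

Lemma pile_cases (x : coin) :
  [\/ pile x = 0, pile x = 1, pile x = 2 | pile x = 3].
Proof.
by case: x => -[[|[|[|[|p]]]] lt_p4] i; [constructor 1|constructor 2
  |constructor 3|constructor 4|].
Qed.

Definition pileA : {set coin} := [set x | pile x == 0].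
Definition pileC : {set coin} := [set x | pile x == 2].

Definition bit_left (j : nat) : {set coin} := [set x |
  [|| (pile x == 0) && bit x.2 j, (pile x == 1) && bit x.2 j
    | (pile x == 2) && ~~ bit x.2 j]].
Definition bit_right (j : nat) : {set coin} := [set x |
  [|| (pile x == 0) && ~~ bit x.2 j, (pile x == 2) && bit x.2 j
    | (pile x == 3) && bit x.2 j]].

Definition weighings : seq ({set coin} * {set coin}) :=
  (pileA, pileC) :: [seq (bit_left j, bit_right j) | j <- iota 0 k].

Lemma fair_weighings : all fair weighings.
Proof.
have swapped_fair (L R : {set coin}) : (forall x, x \in L -> x \notin R) ->
    (forall x, (x \in R) = (swap_piles x \in L)) -> fair (L, R).
  exact: fair_exchanged swap_piles_inj.
apply/andP; split.
  by apply: swapped_fair => [x|x]; rewrite !inE ?swap_piles_pile;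
    case: (pile_cases x) => ->.
apply/allP => _ /mapP[j _ ->].
by apply: swapped_fair => [x|x]; rewrite !inE ?swap_piles_pile;
  case: (pile_cases x) => ->; case: (bit x.2 j).
Qed.

Definition pairAB (a b : 'I_(2 ^ k)) : {set coin} := [set (inord 0, a); (inord 1, b)].
Definition pairCD (c d : 'I_(2 ^ k)) : {set coin} := [set (inord 2, c); (inord 3, d)].

Lemma coins_in_distinct_piles p q (i j : 'I_(2 ^ k)) : p < 4 -> q < 4 ->
  p != q -> ((inord p, i) : coin) != (inord q, j).
Proof.
move=> lt_p lt_q; apply: contra => /eqP[/(congr1 val)].
by rewrite /= !inordK // => ->.
Qed.

Lemma card_pairAB a b P :
  #|pairAB a b :&: P| = ((inord 0, a) \in P) + ((inord 1, b) \in P).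
Proof. exact/card_pairI/coins_in_distinct_piles. Qed.

Lemma card_pairCD c d P :
  #|pairCD c d :&: P| = ((inord 2, c) \in P) + ((inord 3, d) \in P).
Proof. exact/card_pairI/coins_in_distinct_piles. Qed.

Lemma first_weighing_AB a b : outcome_of (pairAB a b) pileA pileC = Less.
Proof. by rewrite /outcome_of !card_pairAB !inE !pile_inord. Qed.

Lemma first_weighing_CD c d : outcome_of (pairCD c d) pileA pileC = More.
Proof. by rewrite /outcome_of !card_pairCD !inE !pile_inord. Qed.

Lemma bit_weighing_AB a b a' b' j :
  outcome_of (pairAB a b) (bit_left j) (bit_right j) =
  outcome_of (pairAB a' b') (bit_left j) (bit_right j) ->
  bit a j = bit a' j /\ bit b j = bit b' j.
Proof.
rewrite /outcome_of !card_pairAB !inE !pile_inord //=.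
by case: (bit a j); case: (bit b j); case: (bit a' j); case: (bit b' j).
Qed.

Lemma bit_weighing_CD c d c' d' j :
  outcome_of (pairCD c d) (bit_left j) (bit_right j) =
  outcome_of (pairCD c' d') (bit_left j) (bit_right j) ->
  bit c j = bit c' j /\ bit d j = bit d' j.
Proof.
rewrite /outcome_of !card_pairCD !inE !pile_inord //=.
by case: (bit c j); case: (bit d j); case: (bit c' j); case: (bit d' j).
Qed.

Lemma ord_bits_inj (a a' : 'I_(2 ^ k)) :
  (forall j, j < k -> bit a j = bit a' j) -> a = a'.
Proof. by move=> same_bits; apply: val_inj; exact: bits_inj same_bits. Qed.

Definition bit_outcomes (S : {set coin}) : seq outcome :=
  [seq outcome_of S (bit_left j) (bit_right j) | j <- iota 0 k].

Lemma bit_outcomes_eq S S' j : bit_outcomes S = bit_outcomes S' -> j < k ->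
  outcome_of S (bit_left j) (bit_right j) = outcome_of S' (bit_left j) (bit_right j).
Proof. by move=> /eq_in_map same_out lt_jk; apply: same_out; rewrite mem_iota. Qed.

Lemma bit_outcomes_AB a b a' b' :
  bit_outcomes (pairAB a b) = bit_outcomes (pairAB a' b') -> pairAB a b = pairAB a' b'.
Proof.
move=> /bit_outcomes_eq same_out.
by congr pairAB; apply: ord_bits_inj => j /same_out/bit_weighing_AB[].
Qed.

Lemma bit_outcomes_CD c d c' d' :
  bit_outcomes (pairCD c d) = bit_outcomes (pairCD c' d') -> pairCD c d = pairCD c' d'.
Proof.
move=> /bit_outcomes_eq same_out.
by congr pairCD; apply: ord_bits_inj => j /same_out/bit_weighing_CD[].
Qed.

Lemma run_weighings S :
  run (oblivious weighings) S = outcome_of S pileA pileC :: bit_outcomes S.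
Proof. by rewrite run_oblivious /= -map_comp. Qed.

End Piles.

Theorem mainTheorem6 (k : nat) :
  exists t : strategy (coin k),
    valid_strategy t /\ uses_at_most t k.+1 /\ determines t (@admissible k).
Proof.
exists (oblivious (weighings k)); split; first exact/valid_oblivious/fair_weighings.
split; first by have := uses_oblivious (weighings k); rewrite /= size_map size_iota.
move=> S1 S2 adm1 adm2; rewrite !run_weighings => -[first_eq bits_eq].
case: adm1 => -[x [y E1]]; case: adm2 => -[x' [y' E2]]; subst S1 S2.
- exact: bit_outcomes_AB.
- by move: first_eq; rewrite first_weighing_AB first_weighing_CD.
- by move: first_eq; rewrite first_weighing_CD first_weighing_AB.
- exact: bit_outcomes_CD.
Qed.
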